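(* Let $\alpha,\beta\in[0,1]$ and let $r=w_0\to w_1\to\dots\to w_m$ ($m\in\mathbb{N}\cup\{\infty\}$) be a directed path in $T$ starting at the root, where the decoupled process with parameters $(G,r,T,\alpha,\beta)$ is run. Consider independently the decoupled process with the same $\alpha,\beta$ on the path $\mathcal{P}_m$ with vertices $u_0\to u_1\to\dots\to u_m$, root $u_0$. Then for every $t>0$ and every $0\le j<j'\le m$, $$\Pr[\mathrm{origin}_t(w_j)=\mathrm{origin}_t(w_{j'})]=\Pr[\mathrm{origin}_t(u_j)=\mathrm{origin}_t(u_{j'})],$$ where the left probability refers to the process on $T$ and the right one to the process on $\mathcal{P}_m$.
   Context: Decoupled process. Fix $\alpha,\beta\in[0,1]$, a connected locally finite undirected graph $G$, root $r$, and a BFS spanning tree $T$ of $G$ rooted at $r$, oriented away from $r$, with parent map $p$. Let $Z_0=+1$, $Z_1,Z_2,\dots$ i.i.d. uniform on $\{-1,+1\}$, $Z_\infty=\bot$. Counter $\mathrm{count}_0=1$; $\mathrm{origin}_0(r)=0$, $\mathrm{origin}_0(v)=\infty$ for $v\ne r$; the root always has origin $0$; $g_t(v)=Z_{\mathrm{origin}_t(v)}$. Update from $t$ to $t+1$ (independent choices): if $g_t(v)=g_t(p(v))=\bot$ then $\mathrm{origin}_{t+1}(v)=\infty$; nodes with $g_t(v)=\bot\ne g_t(p(v))$ are processed sequentially in a fixed order: w.p. $1-\alpha$, $\mathrm{origin}_{t+1}(v)=\mathrm{origin}_t(p(v))$; w.p. $\alpha$, $\mathrm{origin}_{t+1}(v)$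 is the current counter value and the counter is then incremented; if $g_t(v)\neq\bot$, $v\ne r$: w.p. $\beta$, $\mathrm{origin}_{t+1}(v)=\mathrm{origin}_t(p(v))$, otherwise unchanged. For $n\in\mathbb{N}\cup\{\infty\}$, $\mathcal{P}_n$ denotes the path $u_0\to u_1\to\dots\to u_n$ rooted at $u_0$ (it is its own BFS tree). *)

From HB Require Import structures.
From mathcomp Require Import all_boot all_order all_algebra.
From mathcomp Require Import reals.
Set Implicit Arguments. Unset Strict Implicit. Unset Printing Implicit Defensive.
Import Order.TTheory GRing.Theory Num.Theory.
Local Open Scope ring_scope.

Section Dist.
Variable R : nzRingType.
Definition dist (S : Type) := seq (R * S).
Definition dret S (x : S) : dist S := [:: (1, x)].
Definition dbind S T (d : dist S) (f : S -> dist T) : dist T :=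
  flatten [seq [seq (pr.1 * q.1, q.2) | q <- f pr.2] | pr <- d].
Definition dcoin S (q : R) (x y : S) : dist S := [:: (q, x); (1 - q, y)].
Definition dprob S (d : dist S) (E : pred S) : R := \sum_(pr <- d | E pr.2) pr.1.
End Dist.

Section Graph.
Variable V : eqType.
Variable nbrs : V -> seq V.
Definition adj : rel V := fun u v => v \in nbrs u.
Definition undirected := forall u v, (v \in nbrs u) = (u \in nbrs v).
Definition walk (u : V) (s : seq V) (v : V) := path adj u s && (last u s == v).
Definition connected := forall u v, exists s, walk u s v.
Definition isdist (u v : V) (n : nat) :=
  (exists s, size s = n /\ walk u s v) /\ (forall s, walk u s v -> (n <= size s)%N).
(* p is the parent map of a BFS spanning tree of the graph rooted at r
   (the value p r is irrelevant): parent edges are graph edges, and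
   following parents from v reaches r for the first time after exactly
   dist_G(r, v) steps. *)
Definition bfs_tree (r : V) (p : V -> V) :=
  (forall v, v != r -> p v \in nbrs v) /\
  (forall v n, isdist r v n ->
     iter n p v = r /\ forall k, (k < n)%N -> iter k p v != r).
Definition tch (r : V) (p : V -> V) (u : V) : seq V :=
  [seq v <- undup (nbrs u) | (v != r) && (p v == u)].
End Graph.

Section Process.
Variables (R : nzRingType) (alpha beta : R).
Variables (V : eqType) (r : V) (p : V -> V) (ch : V -> seq V) (rk : V -> nat).

(* state: association list of the nodes with finite origin, and the counter;
   nodes absent from the list have origin infinity (None). *)
Definition state := (seq (V * nat) * nat)%type.
Definition orig (S : seq (V * nat)) (v : V) : option nat :=
  ohead [seq x.2 | x <- S & x.1 == v].
Definition addo (o : option nat) (v : V) (S : seq (V * nat)) :=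
  if o is Some k then rcons S (v, k) else S.
Definition frontier (S : seq (V * nat)) : seq V :=
  sort (fun a b => rk a <= rk b)%N
    (undup [seq v <- flatten [seq ch x.1 | x <- S] | orig S v == None]).
Fixpoint procF (S : seq (V * nat)) (fr : seq V) (acc : state) : dist R state :=
  match fr with
  | [::] => dret R acc
  | v :: fr' =>
      dbind (dcoin alpha (rcons acc.1 (v, acc.2), acc.2.+1)
                         (addo (orig S (p v)) v acc.1, acc.2))
            (procF S fr')
  end.
Fixpoint procA (S : seq (V * nat)) (A : seq V) (acc : state) : dist R state :=
  match A with
  | [::] => dret R acc
  | v :: A' =>
      dbind (dcoin beta (addo (orig S (p v)) v acc.1, acc.2)
                        (addo (orig S v) v acc.1, acc.2))
            (procA S A')
  end.
Definition step (s : state) : dist R state :=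
  dbind (procF s.1 (frontier s.1) ([:: (r, 0%N)], s.2))
        (procA s.1 (undup [seq x.1 | x <- s.1 & x.1 != r])).
Definition init : dist R state := dret R ([:: (r, 0%N)], 1%N).
Definition proc (t : nat) : dist R state := iter t (fun d => dbind d step) init.
Definition prob_same_origin (t : nat) (a b : V) : R :=
  dprob (proc t) (fun s => orig s.1 a == orig s.1 b).
End Process.

(* ---------- the path P_m, m in N \cup {oo} (None = oo) ---------- *)
Definition le_m (m : option nat) (k : nat) : bool :=
  if m is Some n then (k <= n)%N else true.
Lemma le_m0 m : le_m m 0.
Proof. by case: m. Qed.
Definition pV (m : option nat) := {k : nat | le_m m k}.
Definition proot (m : option nat) : pV m := exist _ 0%N (le_m0 m).
Definition pv (m : option nat) (k : nat) : pV m := insubd (proot m) k.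
Definition ppar (m : option nat) (x : pV m) : pV m := pv m (val x).-1.
Definition pch (m : option nat) (x : pV m) : seq (pV m) :=
  if le_m m (val x).+1 then [:: pv m (val x).+1] else [::].
Definition prk (m : option nat) (x : pV m) : nat := val x.

From HB Require Import structures.
From mathcomp Require Import all_boot all_order all_algebra.
From mathcomp Require Import reals.
From mathcomp Require Import boolp ring zify.
Import Order.TTheory GRing.Theory Num.Theory.
Set Implicit Arguments. Unset Strict Implicit.

(* Fix a spine r = w 0 -> w 1 -> ... -> w N of the BFS tree.
   Project a state of the decoupled process to the partition of the spine
   positions 0..N into blocks of equal origin (positions with origin infinity
   left out).  In one step, the new origin of w a depends only on the old
   origins of w a and of its parent w a.-1, both on the spine, plus fresh
   counter values whose actual numbers are forgotten by the partition; the
   vertices off the spine, and the order in which vertices are processed, do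
   not matter.  Hence the projected process is itself a Markov chain, the
   reduced chain, whose kernel depends only on N, alpha and beta.  The event
   origin_t(w j) = origin_t(w j') is read on the partition, so its
   probability is the same for every spine of length N, in particular for
   the path P_m itself. *)

Section Expectation.
Local Open Scope ring_scope.
Variable R : comNzRingType.

Definition expect (S : Type) (d : dist R S) (H : S -> R) : R :=
  \sum_(pr <- d) pr.1 * H pr.2.

Definition dsupp (S : Type) (d : dist R S) : seq S := [seq pr.2 | pr <- d].

Lemma expect_ret S (x : S) H : expect (dret R x) H = H x.
Proof. by rewrite /expect /dret big_seq1 mul1r. Qed.

Lemma expect_bind S T (d : dist R S) (f : S -> dist R T) H :
  expect (dbind d f) H = expect d (fun x => expect (f x) H).
Proof.
elim: d => [|[q x] d IH]; first by rewrite /expect /dbind !big_nil.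
move: IH; rewrite /expect /dbind /= big_cat /= => ->; rewrite big_cons /= big_map.
by rewrite mulr_sumr; congr (_ + _); apply: eq_bigr => i _ /=; rewrite mulrA.
Qed.

Lemma expect_coin S q (x y : S) H :
  expect (dcoin q x y) H = q * H x + (1 - q) * H y.
Proof. by rewrite /expect /dcoin big_cons big_seq1. Qed.

Lemma eq_expect_supp S (d : dist R S) H1 H2 :
  (forall x, List.In x (dsupp d) -> H1 x = H2 x) -> expect d H1 = expect d H2.
Proof.
elim: d => [|[q x] d IH] h; first by rewrite /expect !big_nil.
rewrite /expect !big_cons /= h /=; last by left.
by congr (_ + _); apply: IH => y hy; apply: h; right.
Qed.

Lemma dsupp_bind S T (d : dist R S) (f : S -> dist R T) y :
  List.In y (dsupp (dbind d f)) ->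
  exists x, List.In x (dsupp d) /\ List.In y (dsupp (f x)).
Proof.
elim: d => [|[q x] d IH] //=.
rewrite {1}/dsupp /dbind /= map_cat -/(dbind d f) => hy.
case: (List.in_app_or _ _ _ hy) => h.
  exists x; split; first by left.
  by move: h; rewrite -map_comp /dsupp; congr List.In; apply: eq_map => -[].
by have [z [h1 h2]] := IH h; exists z; split => //; right.
Qed.

Lemma dprob_expect S (d : dist R S) (E : pred S) :
  dprob d E = expect d (fun x => (E x)%:R).
Proof.
rewrite /dprob /expect big_mkcond /=; apply: eq_bigr => i _.
by case: (E i.2); rewrite ?mulr1 ?mulr0.
Qed.

End Expectation.

Section CoinFold.
Local Open Scope ring_scope.
Variable R : comNzRingType.

Fixpoint coin_fold (I A : Type) (q : R) (f g : I -> A -> A) (l : seq I) (a : A)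
    : dist R A :=
  match l with
  | [::] => dret R a
  | v :: l' => dbind (dcoin q (f v a) (g v a)) (coin_fold q f g l')
  end.

Lemma expect_coin_fold_cons I A q (f g : I -> A -> A) v l a H :
  expect (coin_fold q f g (v :: l) a) H =
  q * expect (coin_fold q f g l (f v a)) H
    + (1 - q) * expect (coin_fold q f g l (g v a)) H.
Proof. by rewrite /= expect_bind expect_coin. Qed.

Lemma coin_fold_transport I A B q (f g : I -> A -> A) (f' g' : I -> B -> B)
    (Phi : A -> B) (Inv : A -> Prop) (J : A -> R) (K : B -> R) :
  (forall v a, Inv a -> [/\ Inv (f v a), Inv (g v a),
        Phi (f v a) = f' v (Phi a) & Phi (g v a) = g' v (Phi a)]) ->
  (forall a, Inv a -> J a = K (Phi a)) ->
  forall l a, Inv a ->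
  expect (coin_fold q f g l a) J = expect (coin_fold q f' g' l (Phi a)) K.
Proof.
move=> hsim hleaf; elim=> [|v l IH] a ha; first by rewrite /= !expect_ret hleaf.
have [hf hg hF hG] := hsim v a ha.
by rewrite !expect_coin_fold_cons !IH // hF hG.
Qed.

Lemma coin_fold_inv I A q (f g : I -> A -> A) (Inv : A -> Prop) :
  (forall v a, Inv a -> Inv (f v a) /\ Inv (g v a)) ->
  forall l a, Inv a -> forall y, List.In y (dsupp (coin_fold q f g l a)) -> Inv y.
Proof.
move=> hst; elim=> [|v l IH] a ha y /=; first by case=> // <-.
move=> hin; have [x [/= hx hy]] := dsupp_bind hin; have [hf hg] := hst v a ha.
by case: hx => [ex|[ex|//]]; subst x; apply: IH hy.
Qed.

Lemma coin_fold_filter I A q (f g : I -> A -> A) (P : pred I) :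
  (forall v a, ~~ P v -> f v a = a /\ g v a = a) ->
  forall l a H,
  expect (coin_fold q f g l a) H = expect (coin_fold q f g (filter P l) a) H.
Proof.
move=> hid; elim=> [|v l IH] a H //=; case: ifP => hv.
  by rewrite !expect_coin_fold_cons !IH.
rewrite expect_coin_fold_cons; have [-> ->] := hid v a (negbT hv).
by rewrite -mulrDl subrKC mul1r IH.
Qed.

Lemma coin_fold_map (I : eqType) J A q (f g : I -> A -> A) (f' g' : J -> A -> A)
    (h : I -> J) :
  forall l, (forall v a, v \in l -> f v a = f' (h v) a /\ g v a = g' (h v) a) ->
  forall a H,
  expect (coin_fold q f g l a) H = expect (coin_fold q f' g' (map h l) a) H.
Proof.
elim=> [|v l IH] hl a H //=.
rewrite !expect_coin_fold_cons; have [-> ->] := hl v a (mem_head v l).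
by rewrite !IH // => u b hu; apply: hl; rewrite inE hu orbT.
Qed.

Definition commuting (I : eqType) A (f g : I -> A -> A) :=
  forall x y a, x != y ->
  [/\ f x (f y a) = f y (f x a), f x (g y a) = g y (f x a),
      g x (f y a) = f y (g x a) & g x (g y a) = g y (g x a)].

Lemma coin_fold_rem (I : eqType) A q (f g : I -> A -> A) :
  commuting f g -> forall l x, x \in l -> forall a H,
  expect (coin_fold q f g l a) H =
  q * expect (coin_fold q f g (rem x l) (f x a)) H
    + (1 - q) * expect (coin_fold q f g (rem x l) (g x a)) H.
Proof.
move=> hc; elim=> [|y l IH] x //; rewrite inE => hx a H /=.
case: eqP => [->|/eqP nyx]; first by rewrite expect_coin_fold_cons.
have hxl : x \in l by move: hx; rewrite eq_sym (negbTE nyx).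
have [h1 h2 h3 h4] := hc x y a (contra_neq esym nyx).
by rewrite !expect_coin_fold_cons !(IH x hxl) h1 h2 h3 h4; ring.
Qed.

Lemma coin_fold_perm (I : eqType) A q (f g : I -> A -> A) :
  commuting f g -> forall l1 l2, perm_eq l1 l2 -> forall a H,
  expect (coin_fold q f g l1 a) H = expect (coin_fold q f g l2 a) H.
Proof.
move=> hc; elim=> [|x l1 IH] l2 hp a H.
  by move: hp; rewrite perm_sym => /perm_nilP ->.
have hx : x \in l2 by rewrite -(perm_mem hp) mem_head.
have hp' : perm_eq l1 (rem x l2).
  by rewrite -(perm_cons x); apply: perm_trans hp (perm_to_rem hx).
by rewrite (coin_fold_rem q hc hx) expect_coin_fold_cons !(IH _ hp').
Qed.

End CoinFold.

Section Origins.
Variable V : eqType.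

Lemma orig_cons (S : seq (V * nat)) u k v :
  orig ((u, k) :: S) v = if u == v then Some k else orig S v.
Proof. by rewrite /orig /=; case: ifP. Qed.

Lemma orig_rcons (S : seq (V * nat)) u k v :
  orig (rcons S (u, k)) v =
  if orig S v is Some y then Some y else if u == v then Some k else None.
Proof.
elim: S => [|[a b] S IH]; first by rewrite /orig /=; case: ifP.
by rewrite rcons_cons !orig_cons IH; case: ifP.
Qed.

Lemma orig_addo (S : seq (V * nat)) o u v :
  orig (addo o u S) v =
  if orig S v is Some y then Some y else if u == v then o else None.
Proof.
case: o => [k|] /=; first exact: orig_rcons.
by case: (orig S v) => //; case: ifP.
Qed.

Lemma orig_key (S : seq (V * nat)) v :
  (orig S v != None) = (v \in [seq x.1 | x <- S]).
Proof.
elim: S => [|[a b] S IH] //=; rewrite orig_cons inE.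
case: (a =P v) => [->|hav]; first by rewrite eqxx.
by rewrite IH; case: (v =P a) => // hva; case: hav.
Qed.
End Origins.

(* least N P: the least c <= N satisfying P (or N.+1 if there is none). *)
Section LeastIndex.
Variable N : nat.
Definition least (P : pred nat) : nat := find P (iota 0 N.+1).

Lemma least_spec (P : pred nat) b : P b -> (b <= N)%N ->
  (least P <= b)%N /\ P (least P).
Proof.
move=> hb hbN.
have hh : has P (iota 0 N.+1) by apply/hasP; exists b => //; rewrite mem_iota.
have hlt : (least P < N.+1)%N by move: hh; rewrite has_find size_iota.
split; last by have := nth_find 0 hh; rewrite nth_iota // add0n.
rewrite leqNgt; apply/negP => hlt2.
by have := before_find 0 hlt2; rewrite nth_iota ?add0n ?hb //; lia.
Qed.

Lemma least_has (P : pred nat) : has P (iota 0 N.+1) ->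
  (least P <= N)%N /\ P (least P).
Proof.
move/hasP => [b]; rewrite mem_iota => /andP [_ hb] hP.
have hbN : (b <= N)%N by lia.
by have [h1 h2] := least_spec hP hbN; split => //; lia.
Qed.

Lemma eq_least (P1 P2 : pred nat) :
  (forall c, (c <= N)%N -> P1 c = P2 c) -> least P1 = least P2.
Proof.
move=> h; apply: eq_in_find => c; rewrite mem_iota => /andP [_ hc].
by apply: h; lia.
Qed.

Lemma least_unique (P : pred nat) b : P b -> (b <= N)%N ->
  (forall c, (c <= N)%N -> P c -> c = b) -> least P = b.
Proof. by move=> hb hbN hu; have [h1 h2] := least_spec hb hbN; apply: hu => //; lia. Qed.
End LeastIndex.

(* Fix a spine of positions 0..N (position 0 is the root).
   Its state is the partition of the positions having a finite origin into
   blocks of equal origin, encoded by psi : nat -> option nat sending a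
   position to the least position of its block (None: infinite origin).
   During a step, positions are marked with where their new origin comes
   from: inl c means "the old origin of block c", inr a means "the fresh
   origin created at position a". *)
Section ReducedChain.
Local Open Scope ring_scope.
Variables (R : comNzRingType) (alpha beta : R) (N : nat).

Definition mark := option (nat + nat).
Definition marking := nat -> mark.

Definition mark_if_unset (a : nat) (c : mark) (phi : marking) : marking :=
  fun b => if (b == a) && (phi b == None) then c else phi b.

Definition canonical (phi : marking) : nat -> option nat :=
  fun b => if (b <= N)%N
           then omap (fun _ => least N (fun c => phi c == phi b)) (phi b)
           else None.

Definition mark_fresh (a : nat) := mark_if_unset a (Some (inr a)).
Definition mark_parent (psi : nat -> option nat) (a : nat) :=
  mark_if_unset a (omap inl (psi a.-1)).
Definition mark_self (psi : nat -> option nat) (a : nat) :=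
  mark_if_unset a (omap inl (psi a)).

Definition frontier_pos (psi : nat -> option nat) : seq nat :=
  [seq a <- iota 1 N | (psi a == None) && (psi a.-1 != None)].
Definition active_pos (psi : nat -> option nat) : seq nat :=
  [seq a <- iota 1 N | psi a != None].

Definition root_marking : marking :=
  fun b => if b == 0%N then Some (inl 0%N) else None.
Definition root_partition : nat -> option nat :=
  fun b => if b == 0%N then Some 0%N else None.

Definition reduced_step (psi : nat -> option nat) : dist R (nat -> option nat) :=
  dbind (coin_fold alpha mark_fresh (mark_parent psi) (frontier_pos psi) root_marking)
    (fun phi => dbind (coin_fold beta (mark_parent psi) (mark_self psi) (active_pos psi) phi)
                      (fun phi' => dret R (canonical phi'))).

Definition reduced_law (t : nat) : dist R (nat -> option nat) :=
  iter t (fun d => dbind d reduced_step) (dret R root_partition).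

Lemma mark_if_unset_comm a b c d phi : a != b ->
  mark_if_unset a c (mark_if_unset b d phi) = mark_if_unset b d (mark_if_unset a c phi).
Proof.
move=> hab; apply: funext => z; rewrite /mark_if_unset.
case: (z =P a) => [hza|hza] /=; case: (z =P b) => [hzb|hzb] //=.
by move: hab; rewrite -hza -hzb eqxx.
Qed.

(* marking distinct positions commutes, so both phases are order-independent *)
Lemma commuting_marks (c1 c2 : nat -> mark) :
  commuting (fun a => mark_if_unset a (c1 a)) (fun a => mark_if_unset a (c2 a)).
Proof. by move=> x y phi hxy; split; apply: mark_if_unset_comm. Qed.

End ReducedChain.

Section Projection.
Variables (V : eqType) (r : V) (p : V -> V) (ch : V -> seq V) (rk : V -> nat).
Variables (w : nat -> V) (N : nat).
Hypothesis w_root : w 0 = r.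
Hypothesis w_parent : forall a, (0 < a <= N)%N -> w a != r /\ p (w a) = w a.-1.
Hypothesis w_child : forall a, (0 < a <= N)%N -> w a \in ch (w a.-1).
Hypothesis ch_parent : forall x v, v \in ch x -> v != r /\ p v = x.

Lemma iter_parent_w k b : (k <= b)%N -> (b <= N)%N -> iter k p (w b) = w (b - k).
Proof.
elim: k => [|k IH] hk hb; first by rewrite subn0.
rewrite iterS IH; [|lia|lia].
have [_ ->] := w_parent (a := b - k) ltac:(lia); congr w; lia.
Qed.

(* the spine visits the root only once, hence no vertex twice *)
Lemma w_inj a b : (a <= N)%N -> (b <= N)%N -> w a = w b -> a = b.
Proof.
move=> ha hb; wlog hab : a b ha hb / (a <= b)%N.
  by move=> hw; case: (leqP a b) => h e; [|symmetry]; apply: hw => //; lia.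
move=> e; case: (eqVneq a b) => [//|hne].
have := iter_parent_w (leqnn a) ha; rewrite e subnn w_root => e1.
have := iter_parent_w hab hb; rewrite e1 => e2.
have [+ _] := w_parent (a := b - a) ltac:(lia).
by rewrite -e2 eqxx.
Qed.

Definition on_spine (v : V) : bool := has (fun b => w b == v) (iota 0 N.+1).
Definition spine_pos (v : V) : nat := least N (fun b => w b == v).

Lemma on_spine_w a : (a <= N)%N -> on_spine (w a).
Proof. by move=> ha; apply/hasP; exists a; rewrite ?mem_iota //; lia. Qed.

Lemma spine_pos_w a : (a <= N)%N -> spine_pos (w a) = a.
Proof. by move=> ha; apply: least_unique => // c hc /eqP e; apply: w_inj. Qed.

Lemma spine_posP v : on_spine v -> (spine_pos v <= N)%N /\ w (spine_pos v) = v.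
Proof. by move=> h; have [h1 /eqP h2] := least_has h. Qed.

Definition project (S : seq (V * nat)) : nat -> option nat :=
  fun b => if (b <= N)%N
           then omap (fun x => least N (fun c => orig S (w c) == Some x)) (orig S (w b))
           else None.

Lemma project_None S b : (b <= N)%N -> (project S b == None) = (orig S (w b) == None).
Proof. by move=> hb; rewrite /project hb; case: (orig S (w b)). Qed.

Lemma project_eq S j j' : (j <= N)%N -> (j' <= N)%N ->
  (orig S (w j) == orig S (w j')) = (project S j == project S j').
Proof.
move=> hj hj'; rewrite /project hj hj'.
case ej: (orig S (w j)) => [x|]; case ej': (orig S (w j')) => [y|] //=.
apply/eqP/eqP => [[->] // | [] e].
have [_ h1] := least_spec (P := fun c => orig S (w c) == Some x) (b := j)
  ltac:(by rewrite /= ej) hj.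
have [_ h2] := least_spec (P := fun c => orig S (w c) == Some y) (b := j')
  ltac:(by rewrite /= ej') hj'.
by move: h1 h2; rewrite e => /eqP -> /eqP [->].
Qed.

(* Reading the partial result l of a step started in state (S, s2) as a
   marking of the spine: an origin x < s2 existed before the step and is
   marked by its block in S, a larger origin is fresh and is marked by the
   first spine position carrying it. *)
Section Marks.
Variables (s2 : nat) (S : seq (V * nat)).

Definition mark_of (l : seq (V * nat)) (x : nat) : nat + nat :=
  if (x < s2)%N then
    inl (if has (fun c => orig S (w c) == Some x) (iota 0 N.+1)
         then least N (fun c => orig S (w c) == Some x) else (N.+1 + x)%N)
  else inr (least N (fun c => orig l (w c) == Some x)).

Definition marks (l : seq (V * nat)) : marking :=
  fun b => if (b <= N)%N then omap (mark_of l) (orig l (w b)) else None.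

Lemma marks_big l b : (N < b)%N -> marks l b = None.
Proof. by move=> hb; rewrite /marks leqNgt hb. Qed.

Lemma mark_of_inj l b c x y : (b <= N)%N -> (c <= N)%N ->
  orig l (w b) = Some x -> orig l (w c) = Some y -> mark_of l y = mark_of l x -> y = x.
Proof.
move=> hb hc ex ey; rewrite /mark_of.
case hy: (y < s2)%N; case hx: (x < s2)%N => e; try discriminate e.
- move: e.
  case hhy: (has (fun c => orig S (w c) == Some y) (iota 0 N.+1));
  case hhx: (has (fun c => orig S (w c) == Some x) (iota 0 N.+1)) => -[e].
  + have [_ h1] := least_has hhy; have [_ h2] := least_has hhx.
    by move: h1 h2; rewrite /= e => /eqP -> /eqP [].
  + by have [h1 _] := least_has hhy; lia.
  + by have [h1 _] := least_has hhx; lia.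
  + lia.
- case: e => e.
  have [_ h1] := least_spec (P := fun c => orig l (w c) == Some y) (b := c)
    ltac:(by rewrite /= ey) hc.
  have [_ h2] := least_spec (P := fun c => orig l (w c) == Some x) (b := b)
    ltac:(by rewrite /= ex) hb.
  by move: h1 h2; rewrite /= e => /eqP -> /eqP [].
Qed.

Lemma project_marks l : project l = canonical N (marks l).
Proof.
apply: funext => b; rewrite /project /canonical; case: ifP => hb //.
have -> : marks l b = omap (mark_of l) (orig l (w b)) by rewrite /marks hb.
case eb: (orig l (w b)) => [x|] //=.
congr Some; apply: eq_least => c hc.
rewrite /marks hc; case ec: (orig l (w c)) => [y|] //=.
by apply/eqP/eqP => [[->] // | [] /(mark_of_inj hb hc eb ec) ->].
Qed.

Lemma marks_addo l v y :
  (forall x, y = Some x -> (s2 <= x)%N -> forall c, (c <= N)%N -> orig l (w c) != Some x) ->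
  marks (addo y v l) = fun b => if (b <= N)%N && (w b == v) && (marks l b == None)
                                then omap (mark_of (addo y v l)) y else marks l b.
Proof.
move=> hy; apply: funext => b.
case: (leqP b N) => hb /=; last by rewrite /marks leqNgt hb.
rewrite /marks hb orig_addo.
case eb: (orig l (w b)) => [z|] /=; last by rewrite eq_sym andbT; case: ifP.
rewrite andbF; congr Some; rewrite /mark_of; case: ifP => hz //.
congr inr; apply: eq_least => c hc; rewrite orig_addo.
case ec: (orig l (w c)) => [u|] //; case: ifP => // _.
case: y hy => [k|] hy //; apply/eqP => -[ek]; rewrite ek in hy.
have hz' : (s2 <= z)%N by rewrite leqNgt hz.
by move: (hy z erefl hz' b hb); rewrite eb eqxx.
Qed.
End Marks.

Definition spine_update (tf : nat -> marking -> marking) (v : V) (phi : marking) :=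
  if on_spine v then tf (spine_pos v) phi else phi.

Lemma spine_update_mark (cc : nat -> mark) code0 phi v :
  (forall b, (N < b)%N -> phi b = None) ->
  (forall b, (b <= N)%N -> w b = v -> phi b = None -> cc b = code0) ->
  spine_update (fun a => mark_if_unset a (cc a)) v phi =
  fun b => if (b <= N)%N && (w b == v) && (phi b == None) then code0 else phi b.
Proof.
move=> hN hc; apply: funext => b; rewrite /spine_update.
case: ifP => hp; last first.
  case: (leqP b N) => hb //=; case: (w b =P v) => //= e.
  by move: hp; rewrite -e on_spine_w.
have [hi hwi] := spine_posP hp; rewrite /mark_if_unset.
case: (b =P spine_pos v) => [->|hbi] /=.
  by rewrite hi hwi eqxx /=; case: eqP => // /eqP e; apply: hc => //; apply/eqP.
case: (leqP b N) => hb //=; case: (w b =P v) => //= e.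
by case: hbi; apply: w_inj => //; rewrite e hwi.
Qed.

Definition state_inv (s : state V) :=
  orig s.1 r = Some 0%N /\ (forall v x, orig s.1 v = Some x -> (x < s.2)%N).
Definition acc_inv (s2 : nat) (acc : state V) := state_inv acc /\ (s2 <= acc.2)%N.

Lemma state_inv_root s2 : (0 < s2)%N -> state_inv ([:: (r, 0%N)], s2).
Proof.
move=> hs2; split=> [|u x]; first by rewrite /= orig_cons eqxx.
by rewrite /= orig_cons /orig /=; case: ifP => // _ [<-].
Qed.

Lemma acc_inv_start S s2 : state_inv (S, s2) -> acc_inv s2 ([:: (r, 0%N)], s2).
Proof. by case=> h0 hv; split=> //; apply: state_inv_root; apply: hv h0. Qed.

Definition fresh_upd (v : V) (acc : state V) : state V :=
  (rcons acc.1 (v, acc.2), acc.2.+1).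
Definition parent_upd (S : seq (V * nat)) (v : V) (acc : state V) : state V :=
  (addo (orig S (p v)) v acc.1, acc.2).
Definition self_upd (S : seq (V * nat)) (v : V) (acc : state V) : state V :=
  (addo (orig S v) v acc.1, acc.2).

Lemma mark_of_old s2 S l c : state_inv (S, s2) -> (c <= N)%N ->
  omap (mark_of s2 S l) (orig S (w c)) = omap inl (project S c).
Proof.
move=> [_ hv] hc; rewrite /project hc; case e: (orig S (w c)) => [x|] //=.
rewrite /mark_of (hv _ _ e).
have hh : has (fun c => orig S (w c) == Some x) (iota 0 N.+1).
  by apply/hasP; exists c; rewrite ?mem_iota ?e //; lia.
by rewrite hh.
Qed.

Lemma sim_addo s2 S (cc : nat -> mark) v l k (y : option nat) :
  acc_inv s2 (l, k) -> (forall x, y = Some x -> (x < s2)%N) ->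
  (forall b, (b <= N)%N -> w b = v -> orig l (w b) = None -> (0 < b)%N ->
     omap (mark_of s2 S (addo y v l)) y = cc b) ->
  acc_inv s2 (addo y v l, k) /\
  marks s2 S (addo y v l) = spine_update (fun a => mark_if_unset a (cc a)) v (marks s2 S l).
Proof.
move=> [[h0 hv] hk] hy hc; split.
  split=> //; split=> [|u x] /=; rewrite orig_addo; first by rewrite h0.
  case e: (orig l u) => [z|]; first by move=> [<-]; apply: (hv u).
  by case: ifP => // _ /hy hx; simpl in hk; lia.
rewrite marks_addo; last by move=> x /hy hx hx2; lia.
rewrite (spine_update_mark (code0 := omap (mark_of s2 S (addo y v l)) y)) //.
  by move=> b hb; apply: marks_big.
move=> b hb hwb; rewrite /marks hb; case e: (orig l (w b)) => [z|] // _.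
symmetry; apply: hc => //; case: b hb hwb e => // hb hwb e.
by move: e; rewrite w_root h0.
Qed.

Lemma sim_fresh s2 S v acc : acc_inv s2 acc ->
  acc_inv s2 (fresh_upd v acc) /\
  marks s2 S (fresh_upd v acc).1 = spine_update mark_fresh v (marks s2 S acc.1).
Proof.
case: acc => l k [[h0 hv] hk]; rewrite /= in h0 hv hk; split.
  split=> /=; last by lia.
  split=> [|u x]; rewrite orig_rcons ?h0 //; case e: (orig l u) => [z|].
    by move=> [<-]; have := hv u z e => /= ?; lia.
  by case: ifP => // _ [<-].
rewrite /fresh_upd /=; change (rcons l (v, k)) with (addo (Some k) v l).
rewrite marks_addo; last first.
  by move=> x [<-] _ c hc; apply/eqP => e; have := hv _ _ e; rewrite ltnn.
rewrite /mark_fresh (spine_update_mark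
  (code0 := omap (mark_of s2 S (addo (Some k) v l)) (Some k))) //.
  by move=> b hb; apply: marks_big.
move=> b hb hwb; rewrite /marks hb; case e: (orig l (w b)) => [z|] // _ /=.
rewrite /mark_of ltnNge hk /=; congr (Some (inr _)); symmetry.
apply: least_unique => //; first by rewrite /= orig_rcons e hwb eqxx.
move=> c hc /=; rewrite orig_rcons; case ec: (orig l (w c)) => [u|].
  by move=> /eqP [eu]; have := hv _ _ ec; rewrite /= eu ltnn.
by case: (v =P w c) => // evc _; apply: w_inj => //; rewrite hwb evc.
Qed.

Lemma sim_parent s2 S v acc : state_inv (S, s2) -> acc_inv s2 acc ->
  acc_inv s2 (parent_upd S v acc) /\
  marks s2 S (parent_upd S v acc).1 = spine_update (mark_parent (project S)) v (marks s2 S acc.1).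
Proof.
move=> hS; case: acc => l k hJ; apply: sim_addo => //.
  by move=> x e; case: hS => _ h; apply: (h _ _ e).
move=> b hb hwb _ hb0; have [_ e] := w_parent (a := b) ltac:(lia).
by rewrite -hwb e mark_of_old //; lia.
Qed.

Lemma sim_self s2 S v acc : state_inv (S, s2) -> acc_inv s2 acc ->
  acc_inv s2 (self_upd S v acc) /\
  marks s2 S (self_upd S v acc).1 = spine_update (mark_self (project S)) v (marks s2 S acc.1).
Proof.
move=> hS; case: acc => l k hJ; apply: sim_addo => //.
  by move=> x e; case: hS => _ h; apply: (h _ _ e).
by move=> b hb hwb _ hb0; rewrite -hwb mark_of_old.
Qed.

Lemma procF_coin_fold (R : comNzRingType) (alpha : R) S fr acc :
  procF alpha p S fr acc = coin_fold alpha fresh_upd (parent_upd S) fr acc.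
Proof. by elim: fr acc => [|v fr IH] acc //=; congr dbind; apply: funext. Qed.

Lemma procA_coin_fold (R : comNzRingType) (beta : R) S A acc :
  procA beta p S A acc = coin_fold beta (parent_upd S) (self_upd S) A acc.
Proof. by elim: A acc => [|v A IH] acc //=; congr dbind; apply: funext. Qed.

Lemma coin_fold_spine (R : comNzRingType) (q : R) (tf1 tf2 : nat -> marking -> marking)
    (l : seq V) (l' : seq nat) phi H :
  commuting tf1 tf2 -> perm_eq (map spine_pos (filter on_spine l)) l' ->
  expect (coin_fold q (spine_update tf1) (spine_update tf2) l phi) H =
  expect (coin_fold q tf1 tf2 l' phi) H.
Proof.
move=> hc hp; rewrite (@coin_fold_filter _ _ _ q _ _ on_spine); last first.
  by move=> v a /negbTE hv; rewrite /spine_update hv.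
rewrite (@coin_fold_map _ _ _ _ q _ _ tf1 tf2 spine_pos); last first.
  by move=> v a; rewrite mem_filter => /andP [hv _]; rewrite /spine_update hv.
exact: coin_fold_perm.
Qed.

Lemma spine_positions_perm (l : seq V) (P : pred nat) : uniq l ->
  (forall v, v \in l -> v != r) ->
  (forall a, (0 < a <= N)%N -> (w a \in l) = P a) ->
  perm_eq (map spine_pos (filter on_spine l)) [seq a <- iota 1 N | P a].
Proof.
move=> hu hr hP; apply: uniq_perm.
- rewrite map_inj_in_uniq ?filter_uniq // => u v.
  rewrite !mem_filter => /andP [hu' _] /andP [hv _] e.
  by have [_ <-] := spine_posP hu'; have [_ <-] := spine_posP hv; rewrite e.
- by rewrite filter_uniq // iota_uniq.
move=> a; apply/mapP/idP.
- case=> v; rewrite mem_filter => /andP [hs hv] ->.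
  have [hi hwi] := spine_posP hs.
  have hi0 : (0 < spine_pos v)%N.
    by case: (spine_pos v) hwi => // e; move: (hr v hv); rewrite -e w_root eqxx.
  have hPi : P (spine_pos v) by rewrite -hP ?hwi //; lia.
  by rewrite mem_filter mem_iota hPi /=; lia.
- rewrite mem_filter mem_iota => /andP [hPa ha].
  have ha' : (0 < a <= N)%N by lia.
  exists (w a); last by rewrite spine_pos_w //; lia.
  by rewrite mem_filter on_spine_w ?hP //; lia.
Qed.

Lemma frontier_spine S :
  perm_eq (map spine_pos (filter on_spine (frontier ch rk S))) (frontier_pos N (project S)).
Proof.
apply: spine_positions_perm; first by rewrite sort_uniq undup_uniq.
  move=> v; rewrite mem_sort mem_undup mem_filter => /andP [_ /flattenP [s]].
  by case/mapP => x _ -> /ch_parent [].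
move=> a ha; have [_ hpa] := w_parent ha.
rewrite mem_sort mem_undup mem_filter !project_None; try lia.
rewrite orig_key; congr (_ && _); apply/flattenP/mapP => [[s /mapP [x hx ->]]|[x hx ex]].
  by case/ch_parent => _; rewrite hpa => ex; exists x.
by exists (ch x.1); [apply: map_f | rewrite -ex; apply: w_child].
Qed.

Lemma active_spine S :
  perm_eq (map spine_pos (filter on_spine (undup [seq x.1 | x <- S & x.1 != r])))
          (active_pos N (project S)).
Proof.
apply: spine_positions_perm; first exact: undup_uniq.
  by move=> v; rewrite mem_undup => /mapP [x]; rewrite mem_filter => /andP [hx _] ->.
move=> a ha; have [har _] := w_parent ha.
rewrite mem_undup project_None ?orig_key; last by lia.
apply/mapP/mapP => [[x] | [x hx ex]]; first by rewrite mem_filter => /andP [_ hx] ->; exists x.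
by exists x; rewrite // mem_filter hx -ex har.
Qed.

Lemma orig_root_spine b : (b <= N)%N ->
  orig [:: (r, 0%N)] (w b) = if b == 0%N then Some 0%N else None.
Proof.
case: b => [|b] hb; first by rewrite w_root orig_cons eqxx.
have [hr _] := w_parent (a := b.+1) ltac:(lia).
by rewrite orig_cons eq_sym (negbTE hr).
Qed.

Lemma least_root_spine :
  least N (fun c => orig [:: (r, 0%N)] (w c) == Some 0%N) = 0%N.
Proof.
apply: least_unique => [|//|c hc]; first by rewrite orig_root_spine.
by rewrite orig_root_spine //; case: (c =P 0%N).
Qed.

Lemma project_root : project [:: (r, 0%N)] = root_partition.
Proof.
apply: funext => b; rewrite /project /root_partition.
case: (leqP b N) => hb; last by case: b hb.
rewrite orig_root_spine //; case: (b =P 0%N) => //= _.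
by rewrite least_root_spine.
Qed.

Lemma marks_root s2 S : state_inv (S, s2) -> marks s2 S [:: (r, 0%N)] = root_marking.
Proof.
move=> [h0 hv]; apply: funext => b; rewrite /marks /root_marking.
case: (leqP b N) => hb; last by case: b hb.
rewrite orig_root_spine //; case: (b =P 0%N) => //= _.
rewrite /mark_of (hv _ _ h0).
have hh : has (fun c => orig S (w c) == Some 0%N) (iota 0 N.+1).
  by apply/hasP; exists 0%N; rewrite ?mem_iota ?w_root ?h0.
rewrite hh; congr (Some (inl _)).
have [] := least_spec (P := fun c => orig S (w c) == Some 0%N) (b := 0%N)
  ltac:(by rewrite /= w_root h0) (leq0n N).
by rewrite leqn0 => /eqP.
Qed.

Section Step.
Local Open Scope ring_scope.
Variables (R : comNzRingType) (alpha beta : R).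

Lemma active_phase_projects S s2 acc (G : (nat -> option nat) -> R) :
  state_inv (S, s2) -> acc_inv s2 acc ->
  expect (procA beta p S (undup [seq x.1 | x <- S & x.1 != r]) acc)
         (fun s' => G (project s'.1)) =
  expect (coin_fold beta (mark_parent (project S)) (mark_self (project S))
                    (active_pos N (project S)) (marks s2 S acc.1))
         (fun phi => G (canonical N phi)).
Proof.
move=> hS hJ; rewrite procA_coin_fold.
rewrite (@coin_fold_transport _ _ _ _ beta _ _
  (spine_update (mark_parent (project S))) (spine_update (mark_self (project S)))
  (fun a => marks s2 S a.1) (acc_inv s2) _ (fun phi => G (canonical N phi))) //.
- by apply: coin_fold_spine; [apply: commuting_marks | apply: active_spine].
- move=> v a ha; have [? ?] := sim_parent v hS ha.
  by have [? ?] := sim_self v hS ha.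
- by move=> a _; rewrite (project_marks s2 S).
Qed.

Lemma step_projects s (G : (nat -> option nat) -> R) : state_inv s ->
  expect (step alpha beta r p ch rk s) (fun s' => G (project s'.1)) =
  expect (reduced_step alpha beta N (project s.1)) G.
Proof.
case: s => S s2 hS.
rewrite /step /reduced_step /= procF_coin_fold !expect_bind.
rewrite (@coin_fold_transport _ _ _ _ alpha _ _
  (spine_update mark_fresh) (spine_update (mark_parent (project S)))
  (fun a => marks s2 S a.1) (acc_inv s2) _
  (fun phi => expect (coin_fold beta (mark_parent (project S)) (mark_self (project S))
                      (active_pos N (project S)) phi) (fun phi => G (canonical N phi)))).
- rewrite /= marks_root //.
  rewrite (coin_fold_spine _ _ _ (commuting_marks _ _) (frontier_spine S)).
  apply: eq_expect_supp => x _; rewrite expect_bind.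
  by apply: eq_expect_supp => y _; rewrite expect_ret.
- move=> v a ha; have [? ?] := sim_fresh S v ha.
  by have [? ?] := sim_parent v hS ha.
- by move=> a ha; apply: active_phase_projects.
- exact: acc_inv_start hS.
Qed.

Lemma step_inv s : state_inv s ->
  forall s', List.In s' (dsupp (step alpha beta r p ch rk s)) -> state_inv s'.
Proof.
case: s => S s2 hS s' hs'; have [acc [hacc hs'']] := dsupp_bind hs'.
rewrite procF_coin_fold in hacc; rewrite procA_coin_fold in hs''.
have hJ : acc_inv s2 acc.
  apply: (coin_fold_inv _ (acc_inv_start hS) hacc) => v a ha.
  by have [? _] := sim_fresh S v ha; have [? _] := sim_parent v hS ha.
suff [] : acc_inv s2 s' by [].
apply: (coin_fold_inv _ hJ hs'') => v a ha.
by have [? _] := sim_parent v hS ha; have [? _] := sim_self v hS ha.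
Qed.

Lemma proc_projects t :
  (forall s, List.In s (dsupp (proc alpha beta r p ch rk t)) -> state_inv s) /\
  forall G, expect (proc alpha beta r p ch rk t) (fun s => G (project s.1)) =
            expect (reduced_law alpha beta N t) G.
Proof.
elim: t => [|t [IHinv IHlaw]].
  split=> [s /= [<-|//]|G]; first exact: state_inv_root.
  by rewrite /proc /reduced_law /= /init !expect_ret /= project_root.
rewrite /proc iterS -/(proc _ _ _ _ _ _ t); split.
  move=> s hs; have [x [hx hxs]] := dsupp_bind hs.
  exact: step_inv (IHinv _ hx) _ hxs.
move=> G; rewrite /reduced_law iterS -/(reduced_law _ _ _ t) !expect_bind -IHlaw.
by apply: eq_expect_supp => x hx; apply: step_projects; apply: IHinv.
Qed.
End Step.

End Projection.

Record spine (V : eqType) (r : V) (p : V -> V) (ch : V -> seq V) (w : nat -> V)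
    (N : nat) : Prop := Spine {
  spine_root : w 0 = r;
  spine_parent : forall a, (0 < a <= N)%N -> w a != r /\ p (w a) = w a.-1;
  spine_child : forall a, (0 < a <= N)%N -> w a \in ch (w a.-1);
  spine_children : forall x v, v \in ch x -> v != r /\ p v = x }.

Lemma prob_same_origin_reduced (R : comNzRingType) (alpha beta : R) (V : eqType)
    (r : V) p ch rk w N t j j' :
  spine r p ch w N -> (j <= N)%N -> (j' <= N)%N ->
  prob_same_origin alpha beta r p ch rk t (w j) (w j') =
  expect (reduced_law alpha beta N t) (fun psi => (psi j == psi j')%:R)%R.
Proof.
case=> h0 h1 h2 h3 hj hj'; have [_ <-] := proc_projects rk h0 h1 h2 h3 alpha beta t.
rewrite /prob_same_origin dprob_expect.
by apply: eq_expect_supp => s _; rewrite (project_eq _ _ hj hj').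
Qed.

Lemma le_m_mono m a b : (a <= b)%N -> le_m m b -> le_m m a.
Proof. by case: m => //= n hab hb; lia. Qed.

Lemma tree_spine (V : eqType) (nbrs : V -> seq V) r p m (w : nat -> V) N :
  undirected nbrs -> bfs_tree nbrs r p -> w 0 = r ->
  (forall j, le_m m j.+1 -> w j.+1 != r /\ p (w j.+1) = w j) ->
  le_m m N -> spine r p (tch nbrs r p) w N.
Proof.
move=> hund [hT _] hw0 hw hN.
have hpar a : (0 < a <= N)%N -> w a != r /\ p (w a) = w a.-1.
  by case: a => // a ha; apply: hw; apply: le_m_mono hN; lia.
split=> // [a ha | x v].
  have [har hpa] := hpar a ha.
  by rewrite /tch mem_filter mem_undup har hpa eqxx /= hund -hpa hT.
by rewrite /tch mem_filter => /andP [/andP [hvr /eqP hpv] _].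
Qed.

Lemma pv_val m a : le_m m a -> val (pv m a) = a.
Proof. by move=> h; rewrite /pv insubdK. Qed.

Lemma path_spine m N : le_m m N -> spine (proot m) (@ppar m) (@pch m) (pv m) N.
Proof.
move=> hN.
have hm a : (a <= N)%N -> le_m m a by move=> ha; apply: le_m_mono hN.
have hroot a : le_m m a -> (pv m a == proot m) = (a == 0%N).
  move=> ha; apply/eqP/eqP => [/(congr1 val)|->]; first by rewrite pv_val.
  by apply: val_inj; rewrite pv_val ?le_m0.
split=> [|a ha|a ha|x v].
- by apply: val_inj; rewrite pv_val ?le_m0.
- have haN : le_m m a by apply: hm; case/andP: ha.
  by rewrite hroot // /ppar pv_val //; split => //; rewrite -lt0n; case/andP: ha.
- have haN : le_m m a by apply: hm; case/andP: ha.
  rewrite /pch pv_val; last by apply: hm; lia.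
  by rewrite prednK ?haN ?mem_head //; case/andP: ha.
rewrite /pch; case: ifP => // hx; rewrite mem_seq1 => /eqP ->.
by rewrite hroot // /ppar pv_val //= /pv valKd.
Qed.

Local Open Scope ring_scope.

Theorem mainTheorem4 (R : realType) (alpha beta : R)
  (halpha : 0 <= alpha <= 1) (hbeta : 0 <= beta <= 1)
  (V : eqType) (nbrs : V -> seq V) (r : V) (p : V -> V)
  (hund : undirected nbrs) (hconn : connected nbrs)
  (hT : bfs_tree nbrs r p)
  (rk : V -> nat) (hrk : injective rk)
  (m : option nat) (w : nat -> V)
  (hw0 : w 0%N = r)
  (hw : forall j, le_m m j.+1 -> w j.+1 != r /\ p (w j.+1) = w j)
  (t j j' : nat) (ht : (0 < t)%N) (hjj : (j < j')%N) (hj' : le_m m j') :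
  prob_same_origin alpha beta r p (tch nbrs r p) rk t (w j) (w j')
  = prob_same_origin alpha beta (proot m) (@ppar m) (@pch m) (@prk m) t
      (pv m j) (pv m j').
Proof.
have hj : (j <= j')%N by apply: ltnW.
rewrite (prob_same_origin_reduced _ _ _ t (tree_spine hund hT hw0 hw hj') hj (leqnn j')).
by rewrite (prob_same_origin_reduced _ _ _ t (path_spine hj') hj (leqnn j')).
Qed.
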